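(* Let $n > m \ge 1$ be integers with $n \ge 2m$, let $\mathbb{S} \subseteq \mathbb{R}$, and let $f:\mathbb{S}\to\mathbb{R}^n$ be a function. Let $U=\begin{bmatrix} U_1 & U_2\end{bmatrix}\in\mathbb{R}^{n\times n}$ be an orthogonal matrix with $U_1\in\mathbb{R}^{n\times m}$ and $U_2\in\mathbb{R}^{n\times(n-m)}$ (so $U_1^TU_1=\mathbb{I}_m$, $U_2^TU_2=\mathbb{I}_{n-m}$, $U_1^TU_2=0$), whose columns form a complete basis of the range of $f(\mu)$ for all $\mu\in\mathbb{S}$. Let $P\in\mathbb{R}^{n\times m}$ be a selection operator such that $P^TU_1$ is invertible, and let $\sigma_1\ge\sigma_2\ge\cdots\ge\sigma_m>0$ be the singular values of $P^TU_1$. For $\mu\in\mathbb{S}$ define the masked projection $\tilde f(\mu)=U_1(P^TU_1)^{-1}P^Tf(\mu)$ and the orthogonal projection $\hat f(\mu)=U_1U_1^Tf(\mu)$. Then for every $\mu\in\mathbb{S}$: (i) $\lVert f(\mu)-\tilde f(\mu)\rVert_2^2 \le \left(1+\sum_{i=1}^m \frac{1-\sigma_i^2}{\sigma_i^2}\right)\lVert(\mathbb{I}-U_1U_1^T)f(\mu)\rVert_2^2$; (ii) if $Z_1\in\mathbb{R}^{m\times m}$, $V_1\in\mathbb{R}^{m\times m}$, $V_2\in\mathbb{R}^{(n-m)\times(n-m)}$ are orthogonal matrices with $P^TU_1=Z_1\,\mathrm{diag}(\sigma_1,\dots,\sigma_m)\,V_1^T$ and $P^TU_2=Z_1\begin{bmatrix}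 \mathrm{diag}(\sqrt{1-\sigma_1^2},\dots,\sqrt{1-\sigma_m^2}) & 0\end{bmatrix}V_2^T$ (i.e. $V_2$ is the right singular matrix of $P^TU_2$ arising in the cosine–sine decomposition of the orthogonal matrix $\begin{bmatrix}P & \breve P\end{bmatrix}^T U$, where $\begin{bmatrix}P & \breve P\end{bmatrix}$ is a permutation matrix), and $y:=V_2^TU_2^Tf(\mu)\in\mathbb{R}^{n-m}$, then $$\lVert \tilde f(\mu)-\hat f(\mu)\rVert_2^2=\sum_{i=1}^m \frac{1-\sigma_i^2}{\sigma_i^2}\,y_i^2\le \sum_{i=1}^m \frac{1-\sigma_i^2}{\sigma_i^2}\,\lVert(\mathbb{I}-U_1U_1^T)f(\mu)\rVert_2^2 .$$
   Context: A selection (mask) operator $P\in\mathbb{R}^{n\times m}$ is a matrix whose columns are $m$ distinct columns $e_{j_1},\dots,e_{j_m}$ of the identity matrix $\mathbb{I}_n$, so that $P^Ty=(y_{j_1},\dots,y_{j_m})^T$. $\mathrm{diag}(a_1,\dots,a_m)$ is the diagonal matrix with diagonal entries $a_i$. $\lVert\cdot\rVert_2$ is the Euclidean norm. *)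

From HB Require Import structures.
From mathcomp Require Import all_boot all_order all_algebra.
Set Implicit Arguments. Unset Strict Implicit. Unset Printing Implicit Defensive.
Import Order.TTheory GRing.Theory Num.Theory.
Local Open Scope ring_scope.

Definition orthogonal_mx (R : pzRingType) (k : nat) (Q : 'M[R]_k) : Prop :=
  Q^T *m Q = 1%:M.

Definition selection_op (R : pzRingType) (n m : nat) (P : 'M[R]_(n, m)) : Prop :=
  exists j : 'I_m -> 'I_n, injective j /\
    P = \matrix_(i < n, k < m) (i == j k)%:R.

Definition norm2sq (R : pzRingType) (k : nat) (v : 'cV[R]_k) : R :=
  \sum_(i < k) (v i 0) ^+ 2.

Definition singular_values (R : rcfType) (m : nat) (A : 'M[R]_m)
    (s : 'I_m -> R) : Prop :=
  (forall i, 0 <= s i) /\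
  (forall i j : 'I_m, (i <= j)%N -> s j <= s i) /\
  char_poly (A^T *m A) = \prod_(i < m) ('X - ((s i) ^+ 2)%:P).

(* [diag(sqrt(1 - s_1^2),...,sqrt(1 - s_m^2))  0] as an m x p matrix *)
Definition cs_block (R : rcfType) (m p : nat) (s : 'I_m -> R) : 'M[R]_(m, p) :=
  \matrix_(i < m, j < p) (if (i == j :> nat) then Num.sqrt (1 - (s i) ^+ 2) else 0).

Lemma le_m_nm (n m : nat) : (2 * m <= n)%N -> (m <= n - m)%N.
Proof. move=> h; rewrite leq_subRL; first by rewrite addnn -mul2n.
by apply: leq_trans h; rewrite leq_pmull. Qed.

From HB Require Import structures.
From mathcomp Require Import all_boot all_order all_algebra.
From mathcomp Require Import ring.
Import Order.TTheory GRing.Theory Num.Theory.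
Local Open Scope ring_scope.

(* Write x = U1 a + U2 b with a = U1^T x and b = U2^T x.  With A = P^T U1,
   B = P^T U2 and M = A^-1 B, the masked projection of x is U1 (a + M b), so
   x - x~ = U2 b - U1 M b and x~ - x^ = U1 M b.  Orthogonality gives
   ||x - x~||^2 = ||b||^2 + ||M b||^2 <= (1 + tr (M M^T)) ||b||^2, and since
   P^T P = I we have B B^T = I - A A^T, whence tr (M M^T) = tr ((A^T A)^-1) - m
   = sum_i sigma_i^-2 - m.  For (ii), the two SVDs turn M into
   V1 diag(sigma)^-1 [diag(sqrt(1 - sigma^2)) 0] V2^T, which evaluates
   ||M b||^2 in the coordinates y = V2^T b. *)

Set Implicit Arguments. Unset Strict Implicit. Unset Printing Implicit Defensive.

Section Norm2sqRing.
Variable R : comPzRingType.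

Lemma norm2sqE k (v : 'cV[R]_k) : norm2sq v = (v^T *m v) 0 0.
Proof. by rewrite /norm2sq mxE; apply: eq_bigr => i _; rewrite !mxE expr2. Qed.

Lemma norm2sqZ k a (v : 'cV[R]_k) : norm2sq (a *: v) = a ^+ 2 * norm2sq v.
Proof. by rewrite /norm2sq mulr_sumr; apply: eq_bigr => i _; rewrite mxE exprMn. Qed.

Lemma norm2sq_isometry p q (W : 'M[R]_(p, q)) v :
  W^T *m W = 1%:M -> norm2sq (W *m v) = norm2sq v.
Proof. by move=> hW; rewrite !norm2sqE trmx_mul -mulmxA (mulmxA W^T) hW mul1mx. Qed.

Lemma norm2sq_sub_orth n p q (U1 : 'M[R]_(n, p)) (U2 : 'M[R]_(n, q)) b w :
  U1^T *m U1 = 1%:M -> U2^T *m U2 = 1%:M -> U1^T *m U2 = 0 ->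
  norm2sq (U2 *m b - U1 *m w) = norm2sq b + norm2sq w.
Proof.
move=> hU1 hU2 hU12.
have hU21 : U2^T *m U1 = 0 by rewrite -[U1]trmxK -trmx_mul hU12 trmx0.
rewrite !norm2sqE [(_ - _)^T]linearB /= mulmxBl !mulmxBr !trmx_mul -!mulmxA.
rewrite !(mulmxA U2^T) !(mulmxA U1^T) hU1 hU2 hU12 hU21.
by rewrite !mul1mx !mul0mx !mulmx0 !subr0 sub0r opprK mxE.
Qed.

End Norm2sqRing.

Section Norm2sqOrder.
Variable R : realDomainType.

Lemma norm2sq_ge0 k (v : 'cV[R]_k) : 0 <= norm2sq v.
Proof. by apply: sumr_ge0 => i _; apply: sqr_ge0. Qed.

Lemma sqr_le_norm2sq k (v : 'cV[R]_k) i : v i 0 ^+ 2 <= norm2sq v.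
Proof.
by rewrite /norm2sq (bigD1 i) //= lerDl; apply: sumr_ge0 => j _; apply: sqr_ge0.
Qed.

Lemma norm2sq_tr_contraction p q (W : 'M[R]_(p, q)) x :
  W^T *m W = 1%:M -> norm2sq (W^T *m x) <= norm2sq x.
Proof.
move=> hW; have := norm2sq_ge0 (x - W *m (W^T *m x)).
rewrite !norm2sqE [(_ - _)^T]linearB /= mulmxBl !mulmxBr !trmx_mul trmxK !mulmxA.
by rewrite -(mulmxA _ W^T W) hW mulmx1 subrr subr0 !mxE subr_ge0.
Qed.

Lemma sum_mul_sqr_le k (x y : 'I_k -> R) :
  (\sum_j x j * y j) ^+ 2 <= (\sum_j x j ^+ 2) * (\sum_j y j ^+ 2).
Proof.
have lagrange : \sum_j \sum_l (x j * y l - x l * y j) ^+ 2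
    = 2 * ((\sum_j x j ^+ 2) * (\sum_j y j ^+ 2) - (\sum_j x j * y j) ^+ 2).
  have expand j l : (x j * y l - x l * y j) ^+ 2
      = x j ^+ 2 * y l ^+ 2 + y j ^+ 2 * x l ^+ 2 - 2 * (x j * y j * (x l * y l)).
    by ring.
  have sum_xy : \sum_j \sum_l x j ^+ 2 * y l ^+ 2 = (\sum_j x j ^+ 2) * (\sum_j y j ^+ 2).
    by rewrite big_distrlr.
  have sum_yx : \sum_j \sum_l y j ^+ 2 * x l ^+ 2 = (\sum_j x j ^+ 2) * (\sum_j y j ^+ 2).
    by rewrite mulrC big_distrlr.
  have sum_dot : \sum_j \sum_l 2 * (x j * y j * (x l * y l)) = 2 * (\sum_j x j * y j) ^+ 2.
    by rewrite expr2 big_distrlr mulr_sumr; apply: eq_bigr => j _; rewrite mulr_sumr.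
  under eq_bigr => j _ do rewrite (eq_bigr _ (fun l _ => expand j l)) sumrB big_split.
  by rewrite sumrB big_split /= sum_xy sum_yx sum_dot; ring.
have : 0 <= \sum_j \sum_l (x j * y l - x l * y j) ^+ 2.
  by apply: sumr_ge0 => j _; apply: sumr_ge0 => l _; apply: sqr_ge0.
by rewrite lagrange pmulr_rge0 ?subr_ge0.
Qed.

Lemma norm2sq_mulmx_le p q (M : 'M[R]_(p, q)) v :
  norm2sq (M *m v) <= \tr (M *m M^T) * norm2sq v.
Proof.
rewrite /norm2sq /mxtrace mulr_suml; apply: ler_sum => i _.
rewrite !mxE; under [X in _ <= X * _]eq_bigr => j _ do rewrite !mxE -expr2.
exact: sum_mul_sqr_le.
Qed.

End Norm2sqOrder.

Lemma selection_op_orthonormal (R : pzRingType) n m (P : 'M[R]_(n, m)) :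
  selection_op P -> P^T *m P = 1%:M.
Proof.
case=> j [j_inj ->]; apply/matrixP => k l; rewrite !mxE.
rewrite (bigD1 (j k)) //= !mxE eqxx mul1r big1 ?addr0 ?(inj_eq j_inj) //.
by move=> i /negbTE neq_ij; rewrite !mxE neq_ij mul0r.
Qed.

Lemma orthonormal_complement (R : comUnitRingType) n m
    (U1 : 'M[R]_(n, m)) (U2 : 'M[R]_(n, n - m)) : (m <= n)%N ->
  U1^T *m U1 = 1%:M -> U2^T *m U2 = 1%:M -> U1^T *m U2 = 0 ->
  U1 *m U1^T + U2 *m U2^T = 1%:M.
Proof.
move=> le_mn hU1 hU2 hU12.
have hU21 : U2^T *m U1 = 0 by rewrite -[U1]trmxK -trmx_mul hU12 trmx0.
have hU : (row_mx U1 U2)^T *m row_mx U1 U2 = 1%:M.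
  by rewrite tr_row_mx mul_col_row hU1 hU2 hU12 hU21 -scalar_mx_block.
have hUt : row_mx U1 U2 *m (row_mx U1 U2)^T = 1%:M.
  by move: (row_mx U1 U2) hU; rewrite (subnKC le_mn) => U /mulmx1C.
by move: hUt; rewrite tr_row_mx mul_row_col.
Qed.

Lemma invmx_left (R : comUnitRingType) k (A X : 'M[R]_k) :
  X *m A = 1%:M -> invmx A = X.
Proof.
move=> XA; have [_ A_unit] := mulmx1_unit XA.
by rewrite -[X]mulmx1 -(mulmxV A_unit) mulmxA XA mul1mx.
Qed.

Lemma horner_char_poly (R : comNzRingType) k (A : 'M[R]_k) x :
  (char_poly A).[x] = \det (x%:M - A).
Proof.
rewrite /char_poly -horner_evalE -det_map_mx; congr (\det _).
apply/matrixP => i j; rewrite !mxE /= horner_evalE !(hornerE, hornerMn).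
by case: (i == j); rewrite /= ?mulr1n ?mulr0n.
Qed.

Lemma det_char_poly (R : comNzRingType) k (A : 'M[R]_k) (lam : 'I_k -> R) :
  char_poly A = \prod_(i < k) ('X - (lam i)%:P) -> \det A = \prod_i lam i.
Proof.
move=> hA; have := char_poly_det A; rewrite hA -horner_coef0 horner_prod.
under eq_bigr => i _ do rewrite hornerXsubC sub0r.
rewrite prodrN card_ord => /(congr1 ( *%R ((-1) ^+ k))).
by rewrite !signrMK.
Qed.

Lemma trace_char_poly (R : comNzRingType) k (A : 'M[R]_k) (lam : 'I_k -> R) :
  (0 < k)%N -> char_poly A = \prod_(i < k) ('X - (lam i)%:P) -> \tr A = \sum_i lam i.
Proof.
move=> k_gt0 hA; apply: oppr_inj; rewrite -char_poly_trace // hA.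
have size_lam : size (map lam (enum 'I_k)) = k by rewrite size_map size_enum_ord.
have -> : \prod_(i < k) ('X - (lam i)%:P) = \prod_(a <- map lam (enum 'I_k)) ('X - a%:P).
  by rewrite big_map big_enum.
rewrite -[in X in _`_X.-1]size_lam coefPn_prod_XsubC ?size_lam -?lt0n //.
by rewrite big_map big_enum.
Qed.

Lemma eq_poly_nonzero (R : numFieldType) (p q : {poly R}) :
  (forall x, x != 0 -> p.[x] = q.[x]) -> p = q.
Proof.
move=> eq_pq; apply/eqP; rewrite -subr_eq0; apply/eqP.
apply: (@roots_geq_poly_eq0 _ _ [seq i.+1%:R | i <- iota 0 (size (p - q))]).
- by apply/allP => _ /mapP[i _ ->]; rewrite /root !hornerE eq_pq ?subrr ?pnatr_eq0.
- by rewrite map_inj_uniq ?iota_uniq // => i j /eqP; rewrite eqr_nat => /eqP [].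
- by rewrite size_map size_iota.
Qed.

Lemma char_poly_invmx (R : numFieldType) k (G : 'M[R]_k) (lam : 'I_k -> R) :
  G \in unitmx -> char_poly G = \prod_(i < k) ('X - (lam i)%:P) ->
  char_poly (invmx G) = \prod_(i < k) ('X - (lam i)^-1%:P).
Proof.
move=> G_unit hG; have det_G := det_char_poly hG.
have lam_neq0 i : lam i != 0.
  by apply: contraTneq G_unit => lam0; rewrite unitmxE det_G (bigD1 i) //= lam0 mul0r unitr0.
apply: eq_poly_nonzero => x x_neq0; rewrite horner_char_poly horner_prod.
have -> : x%:M - invmx G = invmx G *m ((- x) *: (x^-1%:M - G)).
  rewrite -scalemxAr mulmxBr mul_mx_scalar mulVmx // scalerBr scalerA mulNr divff //.
  by rewrite scaleN1r scaleNr opprK scalemx1 addrC.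
rewrite det_mulmx det_inv detZ -horner_char_poly hG horner_prod det_G.
rewrite -prodfV -[in (- x) ^+ _](card_ord k) -prodr_const -!big_split /=.
by apply: eq_bigr => i _; rewrite !hornerXsubC; field; rewrite lam_neq0 x_neq0.
Qed.

Lemma trace_invmx_char_poly (R : numFieldType) k (G : 'M[R]_k) (lam : 'I_k -> R) :
  (0 < k)%N -> G \in unitmx -> char_poly G = \prod_(i < k) ('X - (lam i)%:P) ->
  \tr (invmx G) = \sum_i (lam i)^-1.
Proof. by move=> k_gt0 G_unit /(char_poly_invmx G_unit) /(trace_char_poly k_gt0). Qed.

Lemma trace_invmx_gram (R : rcfType) k (A : 'M[R]_k) (s : 'I_k -> R) :
  (0 < k)%N -> A \in unitmx -> singular_values A s ->
  \tr (invmx (A^T *m A)) = \sum_i (s i ^+ 2)^-1.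
Proof.
move=> k_gt0 A_unit [_ [_ char_gram]]; apply: trace_invmx_char_poly => //.
by rewrite unitmx_mul unitmx_tr A_unit.
Qed.

Lemma cs_block_mulmx (R : rcfType) m p (s : 'I_m -> R) (v : 'cV[R]_p)
    (le_mp : (m <= p)%N) i :
  (cs_block p s *m v) i 0 = Num.sqrt (1 - s i ^+ 2) * v (widen_ord le_mp i) 0.
Proof.
rewrite !mxE (bigD1 (widen_ord le_mp i)) //= !mxE eqxx big1 ?addr0 // => j.
by rewrite !mxE -val_eqE eq_sym => /negbTE ->; rewrite mul0r.
Qed.

Section SVD.
Variables (R : rcfType) (m : nat) (Z V : 'M[R]_m) (s : 'I_m -> R).
Hypotheses (oZ : orthogonal_mx Z) (oV : orthogonal_mx V).

Lemma svd_sqr_le1 (A : 'M[R]_m) :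
  A = Z *m diag_mx (\row_i s i) *m V^T ->
  (forall v, norm2sq (A *m v) <= norm2sq v) -> forall i, s i ^+ 2 <= 1.
Proof.
move=> dA A_contr i; pose e : 'cV[R]_m := delta_mx i 0.
have norm_e : norm2sq e = 1.
  rewrite /norm2sq (bigD1 i) //= !mxE eqxx big1 ?addr0 ?expr1n // => j /negbTE neq_ji.
  by rewrite !mxE neq_ji expr0n.
have AVe : A *m (V *m e) = Z *m (s i *: e).
  rewrite dA -!mulmxA (mulmxA V^T) oV mul1mx mul_diag_mx; congr (_ *m _).
  by apply/matrixP => j k; rewrite !mxE; case: eqVneq => [->|]; rewrite ?mulr0.
by have := A_contr (V *m e); rewrite AVe !norm2sq_isometry // norm2sqZ norm_e mulr1.
Qed.

Hypothesis s_neq0 : forall i, s i != 0.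

Lemma invmx_svd (A : 'M[R]_m) : A = Z *m diag_mx (\row_i s i) *m V^T ->
  invmx A = V *m diag_mx (\row_i (s i)^-1) *m Z^T.
Proof.
move=> dA.
have DiD : diag_mx (\row_i (s i)^-1) *m diag_mx (\row_i s i) = 1%:M.
  by rewrite mulmx_diag -diag_const_mx; congr diag_mx; apply/rowP => i; rewrite !mxE mulVf.
apply: invmx_left.
by rewrite dA !mulmxA -(mulmxA _ Z^T) oZ mulmx1 -(mulmxA V) DiD mulmx1 mulmx1C.
Qed.

(* The hypothesis s i ^+ 2 <= 1 is needed because Num.sqrt vanishes on
   negative arguments. *)
Lemma norm2sq_svd_quotient p (A : 'M[R]_m) (B : 'M[R]_(m, p)) (W : 'M[R]_p)
    (le_mp : (m <= p)%N) b :
  A = Z *m diag_mx (\row_i s i) *m V^T -> B = Z *m cs_block p s *m W^T ->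
  (forall i, s i ^+ 2 <= 1) ->
  norm2sq (invmx A *m B *m b)
    = \sum_i (1 - s i ^+ 2) / s i ^+ 2 * ((W^T *m b) (widen_ord le_mp i) 0) ^+ 2.
Proof.
move=> dA dB s_le1; rewrite (invmx_svd dA) dB !mulmxA -(mulmxA _ Z^T) oZ mulmx1.
rewrite -!mulmxA norm2sq_isometry // /norm2sq; apply: eq_bigr => i _.
rewrite mul_diag_mx mxE cs_block_mulmx mxE !exprMn sqr_sqrtr ?subr_ge0 //.
by field; rewrite s_neq0.
Qed.

End SVD.

Section MaskedProjection.
Variables (R : realFieldType) (n m : nat).
Variables (U1 : 'M[R]_(n, m)) (U2 : 'M[R]_(n, n - m)) (P : 'M[R]_(n, m)).
Hypotheses (le_mn : (m <= n)%N) (hU1 : U1^T *m U1 = 1%:M) (hU2 : U2^T *m U2 = 1%:M).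
Hypotheses (hU12 : U1^T *m U2 = 0) (hP : selection_op P) (A_unit : P^T *m U1 \in unitmx).

Local Notation A := (P^T *m U1).
Local Notation B := (P^T *m U2).
Local Notation M := (invmx A *m B).

Lemma proj_complement : 1%:M - U1 *m U1^T = U2 *m U2^T.
Proof. by rewrite -(orthonormal_complement le_mn hU1 hU2 hU12) addrC addKr. Qed.

Lemma proj_decomp (x : 'cV[R]_n) : x = U1 *m (U1^T *m x) + U2 *m (U2^T *m x).
Proof. by rewrite !mulmxA -mulmxDl orthonormal_complement // mul1mx. Qed.

Lemma mask_gram : B *m B^T = 1%:M - A *m A^T.
Proof.
rewrite !trmx_mul !trmxK -mulmxA (mulmxA U2) -proj_complement.
by rewrite mulmxBl mul1mx mulmxBr (selection_op_orthonormal hP) !mulmxA.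
Qed.

Lemma masked_proj_decomp (x : 'cV[R]_n) :
  U1 *m invmx A *m P^T *m x = U1 *m (U1^T *m x) + U1 *m (M *m (U2^T *m x)).
Proof.
rewrite {1}[x]proj_decomp -!mulmxA -mulmxDr; congr (_ *m _).
by rewrite !mulmxDr !mulmxA -(mulmxA _ P^T U1) mulVmx // mul1mx.
Qed.

Lemma norm2sq_masked_residual (x : 'cV[R]_n) :
  norm2sq (x - U1 *m invmx A *m P^T *m x)
    = norm2sq (U2^T *m x) + norm2sq (M *m (U2^T *m x)).
Proof.
rewrite masked_proj_decomp {1}[x]proj_decomp opprD addrA [U1 *m _ + _]addrC addrK.
exact: norm2sq_sub_orth.
Qed.

Lemma masked_sub_orth_proj (x : 'cV[R]_n) :
  U1 *m invmx A *m P^T *m x - U1 *m U1^T *m x = U1 *m (M *m (U2^T *m x)).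
Proof. by rewrite masked_proj_decomp -(mulmxA U1) addrAC subrr add0r. Qed.

Lemma norm2sq_proj_complement (x : 'cV[R]_n) :
  norm2sq ((1%:M - U1 *m U1^T) *m x) = norm2sq (U2^T *m x).
Proof. by rewrite proj_complement -mulmxA norm2sq_isometry. Qed.

Lemma mask_contraction v : norm2sq (A *m v) <= norm2sq v.
Proof.
rewrite -mulmxA -(norm2sq_isometry v hU1).
exact/norm2sq_tr_contraction/selection_op_orthonormal.
Qed.

Lemma trace_mask_quotient : \tr (M *m M^T) = \tr (invmx (A^T *m A)) - m%:R.
Proof.
have -> : invmx (A^T *m A) = invmx A *m (invmx A)^T.
  apply: invmx_left.
  by rewrite -mulmxA (mulmxA _ A^T) -trmx_mul mulmxV // trmx1 mul1mx mulVmx.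
rewrite trmx_mul -mulmxA (mulmxA B) mask_gram mulmxBl mul1mx mulmxBr.
by rewrite -(mulmxA A) -trmx_mul mulVmx // trmx1 mulmx1 mulVmx // linearB /= mxtrace1.
Qed.

Lemma masked_residual_le (x : 'cV[R]_n) :
  norm2sq (x - U1 *m invmx A *m P^T *m x)
    <= (1 + (\tr (invmx (A^T *m A)) - m%:R)) * norm2sq ((1%:M - U1 *m U1^T) *m x).
Proof.
rewrite norm2sq_masked_residual norm2sq_proj_complement mulrDl mul1r lerD2l.
by rewrite -trace_mask_quotient norm2sq_mulmx_le.
Qed.

End MaskedProjection.

Theorem theorem1 (R : rcfType) (n m : nat)
  (hm : (1 <= m)%N) (hmn : (m < n)%N) (h2m : (2 * m <= n)%N)
  (S : pred R) (f : R -> 'cV[R]_n)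
  (U1 : 'M[R]_(n, m)) (U2 : 'M[R]_(n, n - m))
  (hU1 : U1^T *m U1 = 1%:M) (hU2 : U2^T *m U2 = 1%:M) (hU12 : U1^T *m U2 = 0)
  (P : 'M[R]_(n, m)) (hP : selection_op P)
  (hinv : P^T *m U1 \in unitmx)
  (sigma : 'I_m -> R) (hsv : singular_values (P^T *m U1) sigma)
  (hpos : forall i, 0 < sigma i) :
  let ftilde := fun mu => U1 *m invmx (P^T *m U1) *m P^T *m f mu in
  let fhat := fun mu => U1 *m U1^T *m f mu in
  let c := fun i : 'I_m => (1 - sigma i ^+ 2) / sigma i ^+ 2 in
  forall mu, mu \in S ->
    (* (i) *)
    norm2sq (f mu - ftilde mu)
      <= (1 + \sum_(i < m) c i) * norm2sq ((1%:M - U1 *m U1^T) *m f mu)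
    /\
    (* (ii) *)
    (forall (Z1 V1 : 'M[R]_m) (V2 : 'M[R]_(n - m)),
      orthogonal_mx Z1 -> orthogonal_mx V1 -> orthogonal_mx V2 ->
      P^T *m U1 = Z1 *m diag_mx (\row_i sigma i) *m V1^T ->
      P^T *m U2 = Z1 *m cs_block (n - m) sigma *m V2^T ->
      let y := V2^T *m U2^T *m f mu in
      norm2sq (ftilde mu - fhat mu)
        = \sum_(i < m) c i * (y (widen_ord (le_m_nm h2m) i) 0) ^+ 2
      /\
      \sum_(i < m) c i * (y (widen_ord (le_m_nm h2m) i) 0) ^+ 2
        <= \sum_(i < m) c i * norm2sq ((1%:M - U1 *m U1^T) *m f mu)).
Proof.
move=> ftilde fhat c mu _.
have le_mn := ltnW hmn.
have sigma_neq0 i : sigma i != 0 by rewrite gt_eqF.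
have sum_c : \sum_i c i = \tr (invmx ((P^T *m U1)^T *m (P^T *m U1))) - m%:R.
  rewrite (trace_invmx_gram hm hinv hsv) -[m in m%:R]card_ord -sumr_const -sumrB.
  by apply: eq_bigr => i _; rewrite /c; field.
split; first by rewrite sum_c; exact: (masked_residual_le le_mn hU1 hU2 hU12 hP hinv).
move=> Z1 V1 V2 oZ1 oV1 oV2 dA dB y.
have sigma_le1 := svd_sqr_le1 oZ1 oV1 dA (mask_contraction hU1 hP).
split.
  rewrite /ftilde /fhat (masked_sub_orth_proj le_mn hU1 hU2 hU12 hinv).
  rewrite norm2sq_isometry // (norm2sq_svd_quotient oZ1 oV1 sigma_neq0 (le_m_nm h2m) _ dA dB) //.
  by rewrite /y mulmxA.
apply: ler_sum => i _; apply: ler_wpM2l; first by rewrite divr_ge0 ?sqr_ge0 ?subr_ge0.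
rewrite (norm2sq_proj_complement le_mn hU1 hU2 hU12).
have oV2t : V2^T^T *m V2^T = 1%:M by rewrite trmxK; apply: mulmx1C.
rewrite -(norm2sq_isometry (U2^T *m f mu) oV2t) mulmxA.
exact: sqr_le_norm2sq.
Qed.
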